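(* Let $X_1,\dots,X_n$ be forests and $A\subset X=X_1\times\cdots\times X_n$. Let $A_1$ be the set of $x\in X$ for which there exist $x^1,\dots,x^n\in A$ with $x_j=x^j_j\ge x^i_j$ for all $1\le i,j\le n$, and let $A_2=\{y\in X: y\le x\text{ for some }x\in A_1\}$. Then $A_2$ contains the c.h-envelope $\widehat A$ of $A$.
   Context: A partially ordered set $Y$ is a forest if for every $y_0\in Y$ the set $\{y\ge y_0\}$ is finite and totally ordered. On $X$, $y\le x$ means $y_i\le x_i$ for all $i$. A subset $B\subset X$ is hereditary if $x\in B$, $y\le x$ imply $y\in B$. Points $x,y$ are $c$-comparable if $x_i,y_i$ are comparable for every $i$, and then $x\vee y=(\max(x_i,y_i))_i$. $B$ is concave if $x\vee y\in B$ whenever $x,y\in B$ are $c$-comparable. The c.h-envelope $\widehat A$ is the smallest concave hereditary subset of $X$ containing $A$. *)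

From mathcomp Require Import all_boot all_order.
Set Implicit Arguments. Unset Strict Implicit. Unset Printing Implicit Defensive.
Import Order.TTheory.
Local Open Scope order_scope.

Definition forest (d : Order.disp_t) (Y : porderType d) : Prop :=
  forall y0 : Y,
    (exists s : seq Y, forall y : Y, y0 <= y -> y \in s) /\
    (forall y z : Y, y0 <= y -> y0 <= z -> y >=< z).

Section Product.
Variables (n : nat) (d : 'I_n -> Order.disp_t) (X : forall i, porderType (d i)).

Definition point := forall i : 'I_n, X i.

Definition ple (y x : point) : Prop := forall i, y i <= x i.

Definition hereditary (B : point -> Prop) : Prop :=
  forall x y, B x -> ple y x -> B y.

Definition ccomparable (x y : point) : Prop := forall i, x i >=< y i.

Definition pjoin (x y : point) : point := fun i => Order.max (x i) (y i).

Definition concave (B : point -> Prop) : Prop :=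
  forall x y, B x -> B y -> ccomparable x y -> B (pjoin x y).

Definition ch_envelope (A : point -> Prop) : point -> Prop :=
  fun x => forall B : point -> Prop,
    concave B -> hereditary B -> (forall a, A a -> B a) -> B x.

Definition A1 (A : point -> Prop) : point -> Prop :=
  fun x => exists xs : 'I_n -> point,
    (forall i, A (xs i)) /\
    (forall i j, x j = xs j j /\ xs i j <= xs j j).

Definition A2 (A : point -> Prop) : point -> Prop :=
  fun y => exists x, A1 A x /\ ple y x.
End Product.

(* A_2 is hereditary and contains A, so it suffices to show that it is
   concave.  Concavity of A_1 holds in any product of posets: for
   c-comparable x, x' in A_1, witnessed by families xs, xs', the family taking
   in coordinate j the witness of whichever of x_j, x'_j is larger witnesses
   x v x'.  For A_2 the forest hypothesis is what is needed: if y <= x and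
   y' <= x' with y_j, y'_j comparable, then x_j and x'_j both lie above the
   smaller of y_j, y'_j, hence are comparable, so y v y' <= x v x' in A_1. *)
From mathcomp Require Import all_boot all_order.
Import Order.TTheory.
Local Open Scope order_scope.

Lemma forest_comparable_ge {d : Order.disp_t} {Y : porderType d}
  (hY : forest Y) {y y' x x' : Y} : y >=< y' -> y <= x -> y' <= x' -> x >=< x'.
Proof.
move=> /orP[le_yy' | le_y'y] le_yx le_y'x'.
- by have [_ above_y] := hY y; apply: above_y; last exact: le_trans le_y'x'.
- by have [_ above_y'] := hY y'; apply: above_y'; first exact: le_trans le_yx.
Qed.

Lemma comparable_le_maxl {d : Order.disp_t} {T : porderType d} {a b : T} :
  a >=< b -> a <= Order.max a b.
Proof. by move=> cmp_ab; rewrite comparable_le_max // lexx. Qed.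

Lemma comparable_le_maxr {d : Order.disp_t} {T : porderType d} {a b : T} :
  a >=< b -> b <= Order.max a b.
Proof. by move=> cmp_ab; rewrite comparable_le_max // lexx orbT. Qed.

Section Product.
Variables (n : nat) (d : 'I_n -> Order.disp_t) (X : forall i, porderType (d i)).
Implicit Types (A : point X -> Prop) (x y : point X).

Lemma ple_trans y x z : ple y x -> ple x z -> ple y z.
Proof. by move=> le_yx le_xz i; exact: le_trans (le_xz i). Qed.

Lemma ple_pjoin y y' x x' : ccomparable y y' -> ccomparable x x' ->
  ple y x -> ple y' x' -> ple (pjoin y y') (pjoin x x').
Proof. by move=> cmp_y cmp_x le_yx le_y'x' j; exact: comparable_le_max2. Qed.

Lemma A1_pjoin A x x' :
  A1 A x -> A1 A x' -> ccomparable x x' -> A1 A (pjoin x x').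
Proof.
move=> [xs [Axs hxs]] [xs' [Axs' hxs']] cmp_x.
pose zs j := if x j < x' j then xs' j else xs j.
have zs_diag j : zs j j = pjoin x x' j.
  by rewrite /zs /pjoin /Order.max; case: ifP => _;
    [case: (hxs' j j) | case: (hxs j j)].
exists zs; split=> [i | i j]; first by rewrite /zs; case: ifP.
split; first by rewrite zs_diag.
rewrite zs_diag /zs; case: ifP => _.
- by case: (hxs' i j) => <- /le_trans; apply; exact: comparable_le_maxr.
- by case: (hxs i j) => <- /le_trans; apply; exact: comparable_le_maxl.
Qed.

Lemma A2_hereditary A : hereditary (A2 A).
Proof.
move=> y z [x [A1x le_yx]] le_zy.
by exists x; split=> //; exact: ple_trans le_yx.
Qed.

Lemma A2_concave A : (forall i, forest (X i)) -> concave (A2 A).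
Proof.
move=> hforest y y' [x [A1x le_yx]] [x' [A1x' le_y'x']] cmp_y.
have cmp_x : ccomparable x x' :=
  fun j => forest_comparable_ge (hforest j) (cmp_y j) (le_yx j) (le_y'x' j).
exists (pjoin x x'); split; first exact: A1_pjoin.
exact: ple_pjoin.
Qed.

Lemma A_sub_A2 A a : A a -> A2 A a.
Proof. by move=> Aa; exists a; split=> //; exists (fun=> a). Qed.

End Product.

Theorem mainTheorem5 (n : nat) (d : 'I_n -> Order.disp_t)
  (X : forall i : 'I_n, porderType (d i))
  (hforest : forall i : 'I_n, forest (X i))
  (A : point X -> Prop) :
  forall x : point X, ch_envelope A x -> A2 A x.
Proof.
move=> x envx; apply: envx.
- exact: A2_concave.
- exact: A2_hereditary.
- exact: A_sub_A2.
Qed.
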